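(* Let $k\ge3$, $q=p^e$, and let $S(k,q)=S(k,q;f_3,g_3,\ldots,f_k,g_k)$ where each $g_i$ has zero constant term and $1\le d_g<p$. If at least one of the following two conditions holds, then $S(k,q)$ is connected: (1) the polynomials $1,X,f_3,\ldots,f_k$ are $\mathbb{F}_q$-linearly independent and each $g_i$, $3\le i\le k$, has a nonzero coefficient of $X$; (2) the polynomials $f_3,\ldots,f_k$ are $\mathbb{F}_q$-linearly independent and there exists $j$ with $2\le j\le d_g$ such that each $g_i$, $3\le i\le k$, has a nonzero coefficient of $X^j$.
   Context: For $k\ge3$ and polynomials $f_i,g_i\in\mathbb{F}_q[X]$ ($3\le i\le k$) of degree at most $q-1$ with $g_i(-X)=-g_i(X)$, $S(k,q;f_3,g_3,\ldots,f_k,g_k)$ is the simple graph on vertex set $\mathbb{F}_q^k$ in which $a=(a_1,\ldots,a_k)$ and $b=(b_1,\ldots,b_k)$ are adjacent iff $a_1\ne b_1$ and $b_i-a_i=g_i(b_1-a_1)f_i\!\left(\frac{b_2-a_2}{b_1-a_1}\right)$ for $3\le i\le k$. $d_g=\max_{3\le i\le k}\deg g_i$. *)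

From HB Require Import structures.
From mathcomp Require Import all_boot all_order all_algebra all_field.
Set Implicit Arguments. Unset Strict Implicit. Unset Printing Implicit Defensive.
Import Order.TTheory GRing.Theory Num.Theory.
Local Open Scope ring_scope.

(* Vertices of S(k,q): row vectors a = (a_1,...,a_k), stored 0-based:
   paper's a_j is (a 0 (j-1)).  Paper index i (3 <= i <= k) is 0-based i' with 2 <= i' < k. *)

(* j-th coordinate (0-based) of a vertex; j < k in all uses below (k >= 3) *)
Definition crd (F : fieldType) (k : nat) (a : 'rV[F]_k) (j : nat) : F :=
  odflt 0 (omap (a 0) (insub j : option 'I_k)).

Definition S_rel (F : finFieldType) (k : nat) (f g : 'I_k -> {poly F}) : rel 'rV[F]_k :=
  fun a b =>
    (crd b 0 != crd a 0) &&
    [forall i : 'I_k, (2 <= i)%N ==>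
      (b 0 i - a 0 i ==
        (g i).[crd b 0 - crd a 0] * (f i).[(crd b 1 - crd a 1) / (crd b 0 - crd a 0)])].

Definition S_connected (F : finFieldType) (k : nat) (f g : 'I_k -> {poly F}) : Prop :=
  forall a b : 'rV[F]_k, connect (S_rel f g) a b.

Definition lin_indep (F : fieldType) (I : finType) (P : pred I) (v : I -> {poly F}) : Prop :=
  forall c : I -> F, \sum_(i | P i) c i *: v i = 0 -> forall i, P i -> c i = 0.

(* d_g = max_{3<=i<=k} deg g_i  (deg 0 taken as 0) *)
Definition d_g (F : fieldType) (k : nat) (g : 'I_k -> {poly F}) : nat :=
  \max_(i < k | (2 <= i)%N) (size (g i)).-1.

From HB Require Import structures.
From mathcomp Require Import all_boot all_order all_algebra all_field.
From mathcomp Require Import ring.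
Set Implicit Arguments. Unset Strict Implicit. Unset Printing Implicit Defensive.
Import Order.TTheory GRing.Theory Num.Theory.
Local Open Scope ring_scope.

(* The vertices reachable from 0 form an additive subgroup of F^k: adjacency
   is translation invariant, and -v = (p-1)v in characteristic p.  For every
   slope u the vertices (x, u x, f_i(u) g_i(x)) are neighbours of 0; in x this
   is a vector of polynomials of degree at most d_g < p, and finite differences
   with steps 1/m extract every multiple of each of its coefficient vectors.
   A linear form killing these coefficient vectors for all u yields a
   polynomial in u of degree < q vanishing on F_q, hence zero, so by the
   linear independence hypothesis the form is 0: the subgroup is all of F^k. *)

Section SpanningFamily.
Variables (F : fieldType) (k : nat) (H : 'rV[F]_k -> Prop).
Hypotheses (H0 : H 0) (HD : forall u v, H u -> H v -> H (u + v)).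

Lemma big_closed (I : Type) (r : seq I) (P : pred I) (G : I -> 'rV_k) :
  (forall i, P i -> H (G i)) -> H (\sum_(i <- r | P i) G i).
Proof. by move=> HG; elim/big_ind: _ => //; apply: HD. Qed.

Lemma closed_full_of_spanning (I : finType) (R : I -> 'rV[F]_k) :
  (forall y i, H (y *: R i)) ->
  (forall r : 'rV[F]_k, (forall i, \sum_c R i 0 c * r 0 c = 0) -> r = 0) ->
  forall v, H v.
Proof.
move=> HR Hker v.
pose M : 'M[F]_(#|I|, k) := \matrix_(i, c) R (enum_val i) 0 c.
have freeMT : row_free M^T.
  rewrite -kermx_eq0; apply/negP => /negP /rowV0Pn [w /sub_kermxP wM wnz].
  case/negP: wnz; apply/eqP; apply: Hker => i.
  have := congr1 (fun A : 'M_(1, #|I|) => A 0 (enum_rank i)) wM.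
  rewrite !mxE => wMi; apply: etrans wMi; apply: eq_bigr => c _.
  by rewrite !mxE enum_rankK mulrC.
have /row_fullP [B BM] : row_full M by rewrite /row_full -mxrank_tr.
have -> : v = (v *m B) *m M by rewrite -mulmxA BM mulmx1.
rewrite mulmx_sum_row; apply: big_closed => i _.
have -> : row i M = R (enum_val i) by apply/rowP => c; rewrite !mxE.
exact: HR.
Qed.

End SpanningFamily.

Section ShiftedPolynomial.
Variable F : fieldType.
Implicit Types (P : {poly F}) (h x : F).

Lemma size_XaddC_exp h i : size (('X + h%:P) ^+ i) = i.+1.
Proof.
rewrite polySpred ?size_exp ?size_XaddC ?mul1n //.
exact/monic_neq0/monic_exp/monicXaddC.
Qed.

Lemma coef_XaddC_exp_ge h i j : (i <= j)%N -> (('X + h%:P) ^+ i)`_j = (i == j)%:R.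
Proof.
rewrite leq_eqVlt => /predU1P [<-|ltij]; last first.
  by rewrite (ltn_eqF ltij) nth_default // size_XaddC_exp.
rewrite eqxx; have := lead_coef_exp ('X + h%:P) i.
by rewrite lead_coefXaddC expr1n lead_coefE size_XaddC_exp.
Qed.

Lemma coef_XaddC_exp_subdiag h i : (('X + h%:P) ^+ i.+1)`_i = i.+1%:R * h.
Proof.
elim: i => [|i IH]; first by rewrite expr1 coefD coefX coefC add0r mul1r.
rewrite exprSr mulrDr coefD coefMX coefMC /= IH coef_XaddC_exp_ge // eqxx.
by rewrite -mulrDl -[in RHS]addn1 natrD.
Qed.

Lemma coef_comp_poly_wide P q n N : (size P <= N)%N ->
  (P \Po q)`_n = \sum_(i < N) P`_i * (q ^+ i)`_n.
Proof.
move=> szP; rewrite coef_comp_poly (big_ord_widen N (fun i => P`_i * (q ^+ i)`_n) szP).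
rewrite big_mkcond; apply: eq_bigr => i _; case: ifP => // /negbT.
by rewrite -leqNgt => lePi; rewrite nth_default // mul0r.
Qed.

Section TopCoefficients.
Variables (P : {poly F}) (n : nat) (h : F).
Hypothesis szP : (size P <= n.+2)%N.

Lemma coef_comp_XaddC_top : (P \Po ('X + h%:P))`_n.+1 = P`_n.+1.
Proof.
rewrite (coef_comp_poly_wide _ _ szP) big_ord_recr /= big1.
  by rewrite add0r coef_XaddC_exp_ge // eqxx mulr1.
by move=> i _; rewrite coef_XaddC_exp_ge ?(ltn_eqF (ltn_ord i)) ?mulr0 // ltnW.
Qed.

Lemma coef_comp_XaddC_subtop :
  (P \Po ('X + h%:P))`_n = P`_n + n.+1%:R * h * P`_n.+1.
Proof.
rewrite (coef_comp_poly_wide _ _ szP) !big_ord_recr /= big1.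
  by rewrite add0r coef_XaddC_exp_ge // eqxx coef_XaddC_exp_subdiag mulr1 mulrC.
by move=> i _; rewrite coef_XaddC_exp_ge ?(ltn_eqF (ltn_ord i)) ?mulr0 // ltnW.
Qed.

Lemma size_shift_diff : (size (P \Po ('X + h%:P) - P)%R <= n.+1)%N.
Proof.
apply/leq_sizeP => j; rewrite leq_eqVlt => /predU1P [<-|ltnj].
  by rewrite coefB coef_comp_XaddC_top subrr.
have szPh : (size (P \Po ('X + h%:P)) <= n.+2)%N.
  by rewrite size_comp_poly2 ?size_XaddC.
by rewrite coefB !nth_default ?subrr // (leq_trans _ ltnj).
Qed.

End TopCoefficients.

Lemma horner_shift_diff P h x :
  (P \Po ('X + h%:P) - P).[x] = P.[x + h] - P.[x].
Proof. by rewrite hornerD hornerN horner_comp hornerD hornerX hornerC. Qed.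

End ShiftedPolynomial.

Section CoefficientExtraction.
Variables (F : fieldType) (p k : nat) (H : 'rV[F]_k -> Prop).
Hypotheses (charFp : p \in [pchar F]) (H0 : H 0).
Hypothesis HD : forall u v, H u -> H v -> H (u + v).

Lemma closedN u : H u -> H (- u).
Proof.
have p_gt0 : (0 < p)%N by rewrite prime_gt0 ?(pcharf_prime charFp).
have -> : - u = u *+ p.-1.
  apply/eqP; rewrite eq_sym -subr_eq0 opprK -mulrSr prednK //.
  by rewrite -scaler_nat (pcharf0 charFp) scale0r.
by move=> Hu; elim: p.-1 => [|n IHn]; rewrite ?mulrS //; apply: HD.
Qed.

Lemma closedB u v : H u -> H v -> H (u - v).
Proof. by move=> Hu /closedN; apply: HD. Qed.

Definition row_horner (P : 'I_k -> {poly F}) x : 'rV[F]_k := \row_c (P c).[x].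
Definition row_coef (P : 'I_k -> {poly F}) j : 'rV[F]_k := \row_c (P c)`_j.

Lemma natr_neq0_lt_pchar n : (0 < n < p)%N -> n%:R != 0 :> F.
Proof.
case/andP=> n_gt0 ltnp; rewrite -(dvdn_pcharf charFp).
by apply: contraTN ltnp => /(dvdn_leq n_gt0); rewrite -leqNgt.
Qed.

Lemma closed_scaled_lead_coef n (P : 'I_k -> {poly F}) :
  (forall c, size (P c) <= n.+2)%N -> (forall x, H (row_horner P x)) ->
  (n.+1 < p)%N -> forall y, H (y *: row_coef P n.+1).
Proof.
elim: n P => [|n IH] P szP HP ltnp y.
  have -> : y *: row_coef P 1 = row_horner P y - row_horner P 0.
    apply/rowP => c; rewrite !mxE !(horner_coef_wide _ (szP c)) !big_ord_recr.
    by rewrite !big_ord0 /= !expr0 !expr1 !mulr1 mulr0; ring.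
  exact: closedB.
(* Stepping by h = 1/(n+2) keeps the top coefficient: Q_(n+1) = (n+2) h P_(n+2). *)
pose h : F := n.+2%:R^-1.
pose Q c := P c \Po ('X + h%:P) - P c.
have n2_neq0 : n.+2%:R != 0 :> F by apply: natr_neq0_lt_pchar.
have -> : row_coef P n.+2 = row_coef Q n.+1.
  apply/rowP => c; rewrite !mxE coefB coef_comp_XaddC_subtop //.
  by rewrite mulfV // mul1r addrC addKr.
apply: IH => [c||]; [exact: size_shift_diff | move=> x | exact: ltnW].
have -> : row_horner Q x = row_horner P (x + h) - row_horner P x.
  by apply/rowP => c; rewrite !mxE horner_shift_diff.
exact: closedB.
Qed.

Lemma closed_scaled_coef m (P : 'I_k -> {poly F}) :
  (forall c, size (P c) <= m.+1)%N -> (forall x, H (row_horner P x)) -> (m < p)%N ->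
  forall j y, (0 < j <= m)%N -> H (y *: row_coef P j).
Proof.
elim: m P => [|m IH] P szP HP ltmp j y; first by case: j => [|[]].
case/andP => j_gt0 lejm.
have [->|neq_jm] := eqVneq j m.+1; first exact: closed_scaled_lead_coef.
pose P' c := P c - (P c)`_m.+1 *: 'X^(m.+1).
have -> : row_coef P j = row_coef P' j.
  by apply/rowP => c; rewrite !mxE coefB coefZ coefXn (negbTE neq_jm) mulr0 subr0.
apply: IH => [c|x||]; last 2 first.
- exact: ltnW.
- by rewrite j_gt0 -ltnS ltn_neqAle neq_jm.
- apply/leq_sizeP => i lemi; rewrite coefB coefZ coefXn.
  have [->|neq_im] := eqVneq i m.+1; first by rewrite mulr1 subrr.
  by rewrite mulr0 subr0 nth_default // (leq_trans (szP c)) // ltn_neqAle eq_sym neq_im.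
have -> : row_horner P' x = row_horner P x - x ^+ m.+1 *: row_coef P m.+1.
  by apply/rowP => c; rewrite !mxE hornerD hornerN hornerZ hornerXn mulrC.
by apply: closedB => //; apply: closed_scaled_lead_coef.
Qed.

End CoefficientExtraction.

Lemma lin_indep_horner (F : finFieldType) (I : finType) (P : pred I)
    (v : I -> {poly F}) (c : I -> F) :
  lin_indep P v -> (forall i, P i -> size (v i) <= #|F|)%N ->
  (forall u, \sum_(i | P i) c i * (v i).[u] = 0) -> forall i, P i -> c i = 0.
Proof.
move=> indep szv vanish; apply: indep.
apply: (roots_geq_poly_eq0 (rs := enum F)) (enum_uniq _) _.
  apply/allP => u _; rewrite /root horner_sum; apply/eqP; rewrite -[RHS](vanish u).
  by apply: eq_bigr => i _; rewrite hornerZ.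
rewrite -cardE; apply: leq_trans (size_sum _ _ _) _; apply/bigmax_leqP => i Pi.
exact: leq_trans (size_scale_leq _ _) (szv i Pi).
Qed.

Section Translation.
Variables (F : finFieldType) (k : nat) (f g : 'I_k -> {poly F}).

Lemma crdE (a : 'rV[F]_k) (j : 'I_k) : crd a j = a 0 j.
Proof. by rewrite /crd; case: insubP => [j' _ /val_inj -> //|]; rewrite ltn_ord. Qed.

Lemma crd0 j : crd (0 : 'rV[F]_k) j = 0.
Proof. by rewrite /crd; case: insubP => [j' _ _|_] /=; rewrite ?mxE. Qed.

Lemma crdD (a b : 'rV[F]_k) j : crd (a + b) j = crd a j + crd b j.
Proof. by rewrite /crd; case: insubP => [j' _ _|_] /=; rewrite ?mxE ?addr0. Qed.

Lemma S_rel_addr a b c : S_rel f g (a + c) (b + c) = S_rel f g a b.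
Proof.
have addrKB (x y z : F) : x + z - (y + z) = x - y by rewrite opprD addrACA subrr addr0.
rewrite /S_rel !crdD !addrKB (inj_eq (addIr _)); congr (_ && _).
by apply: eq_forallb => i; rewrite !mxE addrKB.
Qed.

Lemma connect_addr a b c :
  connect (S_rel f g) a b -> connect (S_rel f g) (a + c) (b + c).
Proof.
case/connectP => s; elim: s a => [|x s IH] a /= => [_ ->|/andP [ax xs] lastb].
  exact: connect0.
apply: connect_trans (IH x xs lastb).
by apply: connect1; rewrite S_rel_addr.
Qed.

Definition reachable v := connect (S_rel f g) 0 v.

Lemma reachableD u v : reachable u -> reachable v -> reachable (u + v).
Proof.
move=> Hu Hv; apply: connect_trans Hu _.
by have := connect_addr u Hv; rewrite add0r addrC.
Qed.

Lemma S_connected_of_reachable : (forall v, reachable v) -> S_connected f g.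
Proof. by move=> Hall a b; have := connect_addr a (Hall (b - a)); rewrite add0r subrK. Qed.

End Translation.

Section Rays.
Variables (F : finFieldType) (k : nat) (f g : 'I_k -> {poly F}).
Hypothesis k_ge3 : (3 <= k)%N.

Let k_gt1 : (1 < k)%N := leq_trans (isT : 2 <= 3)%N k_ge3.
Let i0 : 'I_k := Ordinal (ltnW k_gt1).
Let i1 : 'I_k := Ordinal k_gt1.

Lemma ord_cases01 (c : 'I_k) : [\/ c = i0, c = i1 | (2 <= c)%N].
Proof.
case: c => [[|[|c]] lt_ck]; last by apply: Or33.
  by apply: Or31; apply: val_inj.
by apply: Or32; apply: val_inj.
Qed.

Lemma big_ord_split01 (G : 'I_k -> F) :
  \sum_c G c = G i0 + G i1 + \sum_(c : 'I_k | (2 <= c)%N) G c.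
Proof.
rewrite (bigD1 i0) // (bigD1 i1) //= addrA; congr (_ + _).
by apply: eq_bigl => -[[|[|c]] ?].
Qed.

(* [row_horner (ray u) x] is the vertex (x, u x, f_i(u) g_i(x)). *)
Definition ray (u : F) (c : 'I_k) : {poly F} :=
  if c == 0%N :> nat then 'X else if c == 1%N :> nat then u *: 'X else (f c).[u] *: g c.

Lemma row_coef_ray u j (c : 'I_k) : row_coef (ray u) j 0 c =
  if c == 0%N :> nat then (j == 1)%:R else if c == 1%N :> nat then u * (j == 1)%:R
  else (f c).[u] * (g c)`_j.
Proof. by rewrite mxE /ray; case: ifP => _; [|case: ifP => _]; rewrite ?coefZ ?coefX. Qed.

Lemma dot_row_coef_ray u j (r : 'rV[F]_k) :
  \sum_c row_coef (ray u) j 0 c * r 0 c =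
  (j == 1)%:R * (r 0 i0 + u * r 0 i1) + \sum_(c : 'I_k | (2 <= c)%N) (g c)`_j * r 0 c * (f c).[u].
Proof.
rewrite big_ord_split01 !row_coef_ray /= mulrDr mulrCA mulrA; congr (_ + _).
apply: eq_bigr => c c_ge2; rewrite row_coef_ray.
by rewrite (gtn_eqF c_ge2) (gtn_eqF (ltnW c_ge2)); ring.
Qed.

Hypothesis g_coef0 : forall i : 'I_k, (2 <= i)%N -> (g i)`_0 = 0.

Lemma reachable_ray u x : reachable f g (row_horner (ray u) x).
Proof.
have [->|x_neq0] := eqVneq x 0.
  have -> : row_horner (ray u) 0 = 0; last exact: connect0.
  apply/rowP => c; rewrite !mxE /ray.
  case: (ord_cases01 c) => [->|->|c_ge2] /=; rewrite ?hornerZ ?hornerX ?mulr0 //.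
  by rewrite (gtn_eqF c_ge2) (gtn_eqF (ltnW c_ge2)) hornerZ horner_coef0 g_coef0 ?mulr0.
apply: connect1; rewrite /S_rel !crd0 !subr0 (crdE _ i0) (crdE _ i1) !mxE /ray /=.
rewrite hornerX x_neq0 hornerZ hornerX mulfK //=; apply/forallP => c; apply/implyP => c_ge2.
rewrite !mxE subr0 /ray (gtn_eqF c_ge2) (gtn_eqF (ltnW c_ge2)) /=.
by rewrite hornerZ mulrC.
Qed.

Variable p : nat.
Hypotheses (charFp : p \in [pchar F]) (dg_gt0 : (0 < d_g g)%N) (dg_ltp : (d_g g < p)%N).

Lemma size_ray u c : (size (ray u c) <= (d_g g).+1)%N.
Proof.
rewrite /ray; case: (ord_cases01 c) => [->|->|c_ge2] /=; first by rewrite size_polyX.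
  by rewrite (leq_trans (size_scale_leq _ _)) ?size_polyX.
rewrite (gtn_eqF c_ge2) (gtn_eqF (ltnW c_ge2)) (leq_trans (size_scale_leq _ _)) //.
rewrite (leq_trans (leqSpred _)) // ltnS.
exact: (leq_bigmax_cond _ c_ge2).
Qed.

Lemma reachable_scaled_coef u j y :
  (0 < j <= d_g g)%N -> reachable f g (y *: row_coef (ray u) j).
Proof.
move=> j_range; apply: (closed_scaled_coef charFp _ (@reachableD _ _ f g) (size_ray u)) => //.
- exact: connect0.
- exact: reachable_ray.
Qed.

Hypothesis size_f : forall i : 'I_k, (2 <= i)%N -> (size (f i) <= #|F|)%N.

Lemma reachable_all_of_indep_1X
  (indep : lin_indep predT (fun i : 'I_k =>
     if i == 0%N :> nat then 1 else if i == 1%N :> nat then 'X else f i))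
  (g1_neq0 : forall i : 'I_k, (2 <= i)%N -> (g i)`_1 != 0) :
  forall v, reachable f g v.
Proof.
apply: (closed_full_of_spanning (connect0 _ _) (@reachableD _ _ f g)
  (R := fun u => row_coef (ray u) 1)) => [y u|r orth].
  by apply: reachable_scaled_coef; rewrite dg_gt0.
pose cf (c : 'I_k) := if (2 <= c)%N then (g c)`_1 * r 0 c else r 0 c.
have cf0 (c : 'I_k) : cf c = 0.
  apply: (lin_indep_horner indep) => // [i _|u].
    case: (ord_cases01 i) => [->|->|i_ge2] /=; first by rewrite size_poly1 ltnW ?finNzRing_gt1.
      by rewrite size_polyX finNzRing_gt1.
    by rewrite (gtn_eqF i_ge2) (gtn_eqF (ltnW i_ge2)) size_f.
  rewrite big_ord_split01 -[RHS](orth u) dot_row_coef_ray /cf /= hornerC hornerX.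
  rewrite mulr1 mul1r [u * _]mulrC; congr (_ + _); apply: eq_bigr => i i_ge2.
  by rewrite i_ge2 (gtn_eqF i_ge2) (gtn_eqF (ltnW i_ge2)).
apply/rowP => c; rewrite mxE; have := cf0 c; rewrite /cf.
case: ifP => // c_ge2 /eqP.
by rewrite mulf_eq0 (negbTE (g1_neq0 c c_ge2)) => /eqP.
Qed.

Lemma reachable_all_of_indep_coef j
  (indep : lin_indep (fun i : 'I_k => (2 <= i)%N) f)
  (j_range : (2 <= j <= d_g g)%N)
  (gj_neq0 : forall i : 'I_k, (2 <= i)%N -> (g i)`_j != 0) :
  forall v, reachable f g v.
Proof.
have [j_ge2 j_le] := andP j_range.
apply: (closed_full_of_spanning (connect0 _ _) (@reachableD _ _ f g) (I := (F * bool)%type)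
  (R := fun ub => row_coef (ray ub.1) (if ub.2 then j else 1))) => [y [u b]|r orth].
  by apply: reachable_scaled_coef; case: b; rewrite ?dg_gt0 ?j_le ?(leq_trans _ j_ge2).
have gr0 : forall c : 'I_k, (2 <= c)%N -> (g c)`_j * r 0 c = 0.
  apply: (lin_indep_horner (c := fun i => (g i)`_j * r 0 i) indep size_f) => u.
  by have := orth (u, true); rewrite /= dot_row_coef_ray (gtn_eqF j_ge2) mul0r add0r.
have r_ge2 (c : 'I_k) : (2 <= c)%N -> r 0 c = 0.
  move=> c_ge2; have /eqP := gr0 c c_ge2.
  by rewrite mulf_eq0 (negbTE (gj_neq0 c c_ge2)) => /eqP.
have line u : r 0 i0 + u * r 0 i1 = 0.
  have := orth (u, false); rewrite /= dot_row_coef_ray mul1r big1 ?addr0 // => c c_ge2.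
  by rewrite r_ge2 ?mulr0 ?mul0r.
have r0 : r 0 i0 = 0 by have := line 0; rewrite mul0r addr0.
have r1 : r 0 i1 = 0 by have := line 1; rewrite r0 add0r mul1r.
by apply/rowP => c; rewrite mxE; case: (ord_cases01 c) => [->|->|/r_ge2].
Qed.

End Rays.

Theorem mainTheorem9 (F : finFieldType) (p : nat) (k : nat)
  (f g : 'I_k -> {poly F})
  (Hp : p \in [pchar F])
  (Hk : (3 <= k)%N)
  (Hdegf : forall i : 'I_k, (2 <= i)%N -> (size (f i) <= #|F|)%N)
  (Hdegg : forall i : 'I_k, (2 <= i)%N -> (size (g i) <= #|F|)%N)
  (Hodd : forall i : 'I_k, (2 <= i)%N -> g i \Po (- 'X) = - g i)
  (Hconst : forall i : 'I_k, (2 <= i)%N -> (g i)`_0 = 0)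
  (Hdg : (1 <= d_g g < p)%N) :
  ( lin_indep predT (fun i : 'I_k =>
        if i == 0%N :> nat then 1 else if i == 1%N :> nat then 'X else f i)
    /\ (forall i : 'I_k, (2 <= i)%N -> (g i)`_1 != 0) )
  \/
  ( lin_indep (fun i : 'I_k => (2 <= i)%N) f
    /\ exists j : nat, (2 <= j <= d_g g)%N /\
         forall i : 'I_k, (2 <= i)%N -> (g i)`_j != 0 ) ->
  S_connected f g.
Proof.
(* [Hodd] only makes [S_rel] symmetric and [Hdegg] is implied by [d_g g < p]. *)
have [dg_gt0 dg_ltp] := andP Hdg.
move=> cases; apply: S_connected_of_reachable.
case: cases => [[indep g1_neq0]|[indep [j [j_range gj_neq0]]]].
- exact: (reachable_all_of_indep_1X Hk Hconst Hp dg_gt0 dg_ltp Hdegf indep g1_neq0).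
- exact: (reachable_all_of_indep_coef Hk Hconst Hp dg_gt0 dg_ltp Hdegf indep j_range gj_neq0).
Qed.
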